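(* There is a polynomial-time computable retraction from $\mathcal B$ onto the set $\Sigma^{**}$ of length-monotone string functions, i.e. a polynomial-time computable total functional $R\colon\mathcal B\to\mathcal B$ with $R(\mathcal B)\subseteq\Sigma^{**}$ and $R(\varphi)=\varphi$ for all $\varphi\in\Sigma^{**}$.
   Context: $\Sigma=\{0,1\}$, $\mathcal B=(\Sigma^* )^{\Sigma^*}$ is the set of total string functions. $\varphi\in\mathcal B$ is length-monotone if $|\mathbf a|\le|\mathbf b|$ implies $|\varphi(\mathbf a)|\le|\varphi(\mathbf b)|$ for all strings; $\Sigma^{**}$ denotes the set of length-monotone string functions. An oracle Turing machine $M^?$ with oracle $\varphi$ replaces, upon entering its query state, the query-tape content $\mathbf b$ by $\varphi(\mathbf b)$ in one time step; $\operatorname{time}_{M^\varphi}(\mathbf a)$ is its number of steps on input $\mathbf a$. The size function is $|\varphi|(n)=\max\{|\varphi(\mathbf a)|:|\mathbf a|\le n\}$. Second-order polynomials are the smallest class of functions $\mathbb N^{\mathbb N}\times\mathbb N\to\mathbb N$ containing all $(l,n)\mapsto p(n)$ for polynomials $p$ with natural coefficients and closed under pointwise sum, pointwise product, and $P\mapsto P^+$, $P^+(l,n)=l(P(l,n))$. A total functional $F\colon\mathcal B\to\mathcal B$ is polynomial-time computable if some oracle machine $M^?$ with $M^\varphi=F(\varphi)$ for all $\varphi$ satisfies $\operatorname{time}_{M^\varphi}(\mathbf a)\le P(|\varphi|,|\mathbf a|)$ for all $\varphi,\mathbf a$, for some second-order polynomial $P$. *)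

From mathcomp Require Import all_boot.
Set Implicit Arguments. Unset Strict Implicit. Unset Printing Implicit Defensive.

(* Strings over Sigma = {0,1} (false = 0, true = 1) and total string functions B. *)
Definition str := seq bool.
Definition strfun := str -> str.

Definition length_monotone (phi : strfun) : Prop :=
  forall a b : str, size a <= size b -> size (phi a) <= size (phi b).

Fixpoint strings_of_len (n : nat) : seq str :=
  if n is n'.+1 then [seq x :: s | x <- [:: false; true], s <- strings_of_len n']
  else [:: [::]].
Definition strings_upto (n : nat) : seq str :=
  flatten [seq strings_of_len k | k <- iota 0 n.+1].

Definition sizefun (phi : strfun) (n : nat) : nat :=
  \max_(a <- strings_upto n) size (phi a).

(* Second-order polynomials: syntax generated by constants and n (hence all
   polynomials with natural coefficients), sum, product, and P |-> P^+. *)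
Inductive sopoly :=
| SConst of nat
| SVar
| SAdd of sopoly & sopoly
| SMul of sopoly & sopoly
| SApp of sopoly.

Fixpoint sop_eval (P : sopoly) (l : nat -> nat) (n : nat) : nat :=
  match P with
  | SConst c => c
  | SVar => n
  | SAdd P1 P2 => sop_eval P1 l n + sop_eval P2 l n
  | SMul P1 P2 => sop_eval P1 l n * sop_eval P2 l n
  | SApp P1 => l (sop_eval P1 l n)
  end.

(* A machine has k+3 one-way-infinite tapes: tape 0 = input tape, tape 1 =
   query tape, tape 2 = output tape, the rest are work tapes. *)
Inductive move := MLeft | MStay | MRight.

Record otm := OTM {
  otm_k : nat;
  otm_Q : finType;
  otm_G : finType;
  otm_blank : otm_G;
  otm_zero : otm_G;
  otm_one : otm_G;
  otm_syms_uniq : uniq [:: otm_blank; otm_zero; otm_one];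
  otm_start : otm_Q;
  otm_query : otm_Q;
  otm_answer : otm_Q;
  otm_halt : otm_Q;
  otm_delta : otm_Q -> ('I_otm_k.+3 -> otm_G) ->
              otm_Q * ('I_otm_k.+3 -> otm_G) * ('I_otm_k.+3 -> move)
}.

Section OTMSemantics.
Variable M : otm.

Local Notation G := (otm_G M).
Local Notation Q := (otm_Q M).
Local Notation I := ('I_(otm_k M).+3).

(* a tape: content of cells 0,1,... (blank beyond the list) and head position *)
Record tape := Tape { cells : seq G; hpos : nat }.

Definition tread (t : tape) : G := nth (otm_blank M) (cells t) (hpos t).
Definition twrite (t : tape) (x : G) : tape :=
  Tape (set_nth (otm_blank M) (cells t) (hpos t) x) (hpos t).
Definition tmove (t : tape) (m : move) : tape :=
  match m with
  | MLeft => Tape (cells t) (hpos t).-1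
  | MStay => t
  | MRight => Tape (cells t) (hpos t).+1
  end.

Definition encode (a : str) : seq G :=
  map (fun b : bool => if b then otm_one M else otm_zero M) a.
Fixpoint decode (s : seq G) : str :=
  match s with
  | x :: r => if x == otm_zero M then false :: decode r
              else if x == otm_one M then true :: decode r else [::]
  | [::] => [::]
  end.

Definition config := (Q * (I -> tape))%type.

Definition idx_input : I := inord 0.
Definition idx_query : I := inord 1.
Definition idx_output : I := inord 2.

Definition init_config (a : str) : config :=
  (otm_start M, fun i => if i == idx_input then Tape (encode a) 0 else Tape [::] 0).

Definition step (phi : strfun) (c : config) : config :=
  let: (q, tp) := c in
  if q == otm_halt M then c
  else if q == otm_query M then
    (otm_answer M,
     fun i => if i == idx_query
              then Tape (encode (phi (decode (cells (tp i))))) 0 else tp i)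
  else
    let: (q', w, m) := @otm_delta M q (fun i => tread (tp i)) in
    (q', fun i => tmove (twrite (tp i) (w i)) (m i)).

Definition run (phi : strfun) (a : str) (t : nat) : config :=
  iter t (step phi) (init_config a).

Definition halted (c : config) : bool := c.1 == otm_halt M.
Definition output (c : config) : str := decode (cells (c.2 idx_output)).

End OTMSemantics.

Definition polytime_functional (F : strfun -> strfun) : Prop :=
  exists (M : otm) (P : sopoly), forall (phi : strfun) (a : str),
    exists t, t <= sop_eval P (sizefun phi) (size a) /\
              halted (run M phi a t) /\ output (run M phi a t) = F phi a.

(** Let [w phi n] ([max_size_zeros]) be the largest length of an answer of
    [phi] to one of the queries [0^0, ..., 0^(n-1)], and let [R phi a]
    ([retract]) be [phi a] cut or padded with zeros to length
    [w phi (|a| + 1)].  Since [w phi] is nondecreasing, [R phi] is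
    length-monotone; if [phi] is length-monotone then
    [w phi (|a| + 1) = |phi (0^|a|)| = |phi a|], so [R phi = phi].  An oracle
    machine computes [R phi a] by asking the queries [0^k] for [k <= |a|] while
    keeping the running maximum of the answer lengths in unary on a work tape,
    and then copying that many symbols of the answer to the query [a].  Each
    of the [|a| + 1] rounds takes [O(|a| + |phi|(|a|))] steps. *)

From HB Require Import structures.
From mathcomp Require Import all_boot zify.
From Stdlib Require Import FunctionalExtensionality.
Set Implicit Arguments. Unset Strict Implicit. Unset Printing Implicit Defensive.

(** * The retraction *)

Fixpoint max_size_zeros (phi : strfun) (k : nat) : nat :=
  if k is j.+1 then maxn (max_size_zeros phi j) (size (phi (nseq j false))) else 0.

Definition retract (phi : strfun) : strfun :=
  fun a => mkseq (nth false (phi a)) (max_size_zeros phi (size a).+1).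

Lemma max_size_zeros_homo phi : {homo max_size_zeros phi : m n / m <= n}.
Proof.
move=> m n; elim: n => [|n IH]; first by rewrite leqn0 => /eqP ->.
rewrite leq_eqVlt ltnS => /predU1P [-> // | /IH le_mn].
exact: leq_trans le_mn (leq_maxl _ _).
Qed.

Lemma max_size_zeros_lm phi : length_monotone phi ->
  forall n, max_size_zeros phi n.+1 = size (phi (nseq n false)).
Proof.
move=> phi_lm; elim=> [|n IH]; first by rewrite /= max0n.
rewrite -[LHS]/(maxn (max_size_zeros phi n.+1) _) IH; apply/maxn_idPr/phi_lm; by rewrite !size_nseq.
Qed.

Lemma retract_length_monotone phi : length_monotone (retract phi).
Proof. by move=> a b le_ab; rewrite !size_mkseq max_size_zeros_homo. Qed.

Lemma retract_id phi : length_monotone phi -> retract phi = phi.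
Proof.
move=> phi_lm; apply: functional_extensionality => a.
have size_phi_a : size (phi (nseq (size a) false)) = size (phi a).
  by apply/eqP; rewrite eqn_leq !phi_lm ?size_nseq.
by rewrite /retract max_size_zeros_lm // size_phi_a mkseq_nth.
Qed.

Lemma mem_strings_of_len (s : str) : s \in strings_of_len (size s).
Proof.
elim: s => [|b s IH] //=.
by rewrite !mem_cat; case: b; rewrite (map_f _ IH) ?orbT.
Qed.

Lemma size_le_sizefun phi s n : size s <= n -> size (phi s) <= sizefun phi n.
Proof.
move=> le_sn; apply: (leq_bigmax_seq (F := fun a => size (phi a)) s _ isT).
apply/flatten_mapP; exists (size s); last exact: mem_strings_of_len.
by rewrite mem_iota; lia.
Qed.

Lemma max_size_zeros_le_sizefun phi n k :
  k <= n.+1 -> max_size_zeros phi k <= sizefun phi n.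
Proof.
elim: k => [|k IH] le_kn //=.
by rewrite geq_max IH ?size_le_sizefun ?size_nseq //; lia.
Qed.

(** * The oracle machine *)

Inductive state :=
  Start | GenQuery | Query | Answer | Widen | RewindWidth | Advance
| RewindInput | CopyInput | Output | Halt.

Definition state_code (q : state) : nat := match q with
  | Start => 0 | GenQuery => 1 | Query => 2 | Answer => 3 | Widen => 4
  | RewindWidth => 5 | Advance => 6 | RewindInput => 7 | CopyInput => 8
  | Output => 9 | Halt => 10 end.

Definition code_state (n : nat) : state := match n with
  | 0 => Start | 1 => GenQuery | 2 => Query | 3 => Answer | 4 => Widen
  | 5 => RewindWidth | 6 => Advance | 7 => RewindInput | 8 => CopyInput
  | 9 => Output | _ => Halt end.

Lemma state_codeK : cancel state_code code_state. Proof. by case. Qed.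

HB.instance Definition _ := Countable.copy state (can_type state_codeK).

Lemma state_enumP : Finite.axiom [:: Start; GenQuery; Query; Answer; Widen;
  RewindWidth; Advance; RewindInput; CopyInput; Output; Halt].
Proof. by apply: Finite.uniq_enumP => //; case. Qed.

HB.instance Definition _ := isFinite.Build state state_enumP.

Definition sym : finType := option bool.
Definition Blank : sym := None.
Definition Zero : sym := Some false.
Definition One : sym := Some true.

Lemma syms_uniq : uniq [:: Blank; Zero; One]. Proof. by []. Qed.

Definition action := (option sym * move)%type.
Definition idle : action := (None, MStay).

(* The five tapes are input, query, output, counter and width.  The counter
   and the width tape hold a number in unary: the marker [One] in cell 0
   followed by that many [Zero]s.  In round [k] the counter holds [k] and the
   width tape the maximal length of the answers to [0^j], [j < k]. *)
Definition trans (q : state) (rI rQ rO rC rW : sym) : state * seq action :=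
  match q with
  | Start => (GenQuery, [:: idle; idle; idle; (Some One, MStay); (Some One, MRight)])
  | GenQuery => match rC with
      | Some false => (GenQuery, [:: idle; (Some Zero, MRight); idle; (None, MLeft); idle])
      | Some true => (Query, [:: idle; (Some Blank, MStay); idle; idle; idle])
      | None => (Halt, [:: idle; idle; idle; idle; idle]) end
  (* The counter head rests on its marker after the queries [0^k], and on cell
     1 after the final query [a]. *)
  | Answer => (if rC == One then Widen else Output, [:: idle; idle; idle; idle; idle])
  | Widen => match rQ with
      | Some _ => (Widen, [:: idle; (None, MRight); idle; idle; (Some Zero, MRight)])
      | None => (RewindWidth, [:: idle; idle; idle; idle; idle]) end
  | RewindWidth =>
      if rW == One then (Advance, [:: idle; idle; idle; idle; (None, MRight)])
      else (RewindWidth, [:: idle; (None, MLeft); idle; idle; (None, MLeft)])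
  | Advance => match rC, rI with
      | Some _, _ => (Advance, [:: idle; idle; idle; (None, MRight); idle])
      | None, None => (RewindInput, [:: idle; idle; idle; idle; idle])
      | None, Some _ => (GenQuery, [:: (None, MRight); idle; idle; (Some Zero, MStay); idle])
      end
  | RewindInput =>
      if rC == One then (CopyInput, [:: idle; idle; idle; (None, MRight); idle])
      else (RewindInput, [:: (None, MLeft); idle; idle; (None, MLeft); idle])
  | CopyInput => match rI with
      | Some b => (CopyInput, [:: (None, MRight); (Some (Some b), MRight); idle; idle; idle])
      | None => (Query, [:: idle; (Some Blank, MStay); idle; idle; idle]) end
  | Output =>
      (* A blank past the end of the answer is output as [0]. *)
      if rW == Zero then
        (Output, [:: idle; (None, MRight); (Some (Some (rQ == One)), MRight); idle;
                     (None, MRight)])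
      else (Halt, [:: idle; idle; idle; idle; idle])
  | _ => (Halt, [:: idle; idle; idle; idle; idle])
  end.

Definition in_tape : 'I_5 := @Ordinal 5 0 isT.
Definition query_tape : 'I_5 := @Ordinal 5 1 isT.
Definition out_tape : 'I_5 := @Ordinal 5 2 isT.
Definition count_tape : 'I_5 := @Ordinal 5 3 isT.
Definition width_tape : 'I_5 := @Ordinal 5 4 isT.

Definition delta (q : state) (r : 'I_5 -> sym) : state * ('I_5 -> sym) * ('I_5 -> move) :=
  let: (q', acts) := trans q (r in_tape) (r query_tape) (r out_tape) (r count_tape)
                          (r width_tape) in
  (q', fun i => odflt (r i) (nth idle acts i).1, fun i : 'I_5 => (nth idle acts i).2).

Definition retract_machine : otm :=
  @OTM 2 state sym Blank Zero One syms_uniq Start Query Answer Halt delta.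

Local Notation conf := (config retract_machine).

(** * Symbolic execution *)

(* Contents are compared extensionally ([view_eq]), so that
   each phase can state the tapes it produces in closed form. *)
Definition view := ((nat -> sym) * nat)%type.

Definition write_view (f : nat -> sym) (h : nat) (o : option sym) : nat -> sym :=
  if o is Some s then fun j => if j == h then s else f j else f.

Definition move_head (h : nat) (m : move) : nat :=
  match m with MLeft => h.-1 | MStay => h | MRight => h.+1 end.

Definition act_view (v : view) (a : action) : view :=
  (write_view v.1 v.2 a.1, move_head v.2 a.2).

Definition view_eq (v w : view) := v.1 =1 w.1 /\ v.2 = w.2.

Definition tape_rep (t : tape retract_machine) (v : view) :=
  hpos t = v.2 /\ forall j, nth Blank (cells t) j = v.1 j.

Definition conf_rep (c : conf) (q : state) (vI vQ vO vC vW : view) :=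
  [/\ c.1 = q, tape_rep (c.2 in_tape) vI, tape_rep (c.2 query_tape) vQ,
      tape_rep (c.2 out_tape) vO
    & tape_rep (c.2 count_tape) vC /\ tape_rep (c.2 width_tape) vW].

Lemma tread_rep t v : tape_rep t v -> tread t = v.1 v.2.
Proof. by case=> hpos_t cells_t; rewrite /tread cells_t hpos_t. Qed.

Lemma tape_rep_step t v a : tape_rep t v ->
  tape_rep (tmove (twrite t (odflt (v.1 v.2) a.1)) a.2) (act_view v a).
Proof.
case: t v a => c h [f h'] [o m] [/= <- cells_t]; split; first by case: m.
move=> j; have -> : cells (tmove (twrite (Tape c h) (odflt (f h) o)) m)
                    = set_nth Blank c h (odflt (f h) o) by case: m.
by rewrite nth_set_nth /=; case: o => [s|] /=; case: (j =P h) => [E|_]; rewrite ?E ?cells_t.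
Qed.

Lemma conf_rep_ext c q vI vQ vO vC vW wI wQ wO wC wW :
  conf_rep c q vI vQ vO vC vW -> view_eq vI wI -> view_eq vQ wQ -> view_eq vO wO ->
  view_eq vC wC -> view_eq vW wW -> conf_rep c q wI wQ wO wC wW.
Proof.
have rep_eq t v w : tape_rep t v -> view_eq v w -> tape_rep t w.
  by case=> hpos_t cells_t [eq_f eq_h]; split=> [|j]; rewrite -?eq_h -?eq_f.
by case=> ? ? ? ? [? ?] ? ? ? ? ?; split; last split; try apply: rep_eq; eauto.
Qed.

Lemma conf_rep_step phi c q vI vQ vO vC vW :
  conf_rep c q vI vQ vO vC vW -> q != Halt -> q != Query ->
  let d := trans q (vI.1 vI.2) (vQ.1 vQ.2) (vO.1 vO.2) (vC.1 vC.2) (vW.1 vW.2) in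
  conf_rep (step phi c) d.1 (act_view vI (nth idle d.2 0)) (act_view vQ (nth idle d.2 1))
    (act_view vO (nth idle d.2 2)) (act_view vC (nth idle d.2 3))
    (act_view vW (nth idle d.2 4)).
Proof.
case: c => q0 tp [/= -> rI rQ rO [rC rW]] /negbTE not_halt /negbTE not_query /=.
rewrite not_halt not_query /delta.
rewrite (tread_rep rI) (tread_rep rQ) (tread_rep rO) (tread_rep rC) (tread_rep rW).
case: trans => q' acts /=.
by split=> //; last split; rewrite /= ?(tread_rep rI) ?(tread_rep rQ) ?(tread_rep rO)
  ?(tread_rep rC) ?(tread_rep rW); apply: tape_rep_step.
Qed.

Definition str_view (y : str) (j : nat) : sym :=
  if j < size y then Some (nth false y j) else Blank.

Lemma str_view_default y j : size y <= j -> str_view y j = Blank.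
Proof. by rewrite /str_view ltnNge => ->. Qed.

Lemma str_view_nth y j : j < size y -> str_view y j = Some (nth false y j).
Proof. by rewrite /str_view => ->. Qed.

Lemma str_view_one y j : (str_view y j == One) = nth false y j.
Proof. by rewrite /str_view; case: ltnP => ?; [case: nth | rewrite nth_default]. Qed.

Lemma nth_encode y j : nth Blank (encode retract_machine y) j = str_view y j.
Proof.
rewrite /encode /str_view; case: ltnP => [lt_jy | le_yj].
  by rewrite (nth_map false) //; case: nth.
by rewrite nth_default ?size_map.
Qed.

Lemma decode_delimited (x : str) (s : seq sym) :
  (forall j, j < size x -> nth Blank s j = Some (nth false x j)) ->
  nth Blank s (size x) = Blank -> @decode retract_machine s = x.
Proof.
elim: x s => [|b x IH] [|z s] //= s_x s_end; first by rewrite s_end.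
  by have := s_x 0 isT.
have /= -> := s_x 0 isT; case: b s_x => s_x /=;
by rewrite IH // => j lt_jx; exact: (s_x j.+1 lt_jx).
Qed.

Lemma idx_inputE : idx_input retract_machine = in_tape.
Proof. by apply: val_inj; rewrite /= inordK. Qed.

Lemma idx_queryE : idx_query retract_machine = query_tape.
Proof. by apply: val_inj; rewrite /= inordK. Qed.

Lemma idx_outputE : idx_output retract_machine = out_tape.
Proof. by apply: val_inj; rewrite /= inordK. Qed.

Lemma conf_rep_query phi c vI fQ hQ vO vC vW x :
  conf_rep c Query vI (fQ, hQ) vO vC vW ->
  (forall j, j < size x -> fQ j = Some (nth false x j)) -> fQ (size x) = Blank ->
  conf_rep (step phi c) Answer vI (str_view (phi x), 0) vO vC vW.
Proof.
case: c => q tp [/= -> rI [_ rQ] rO [rC rW]] fQ_x fQ_end /=; rewrite idx_queryE.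
have dec_x : @decode retract_machine (cells (tp query_tape)) = x.
  by apply: decode_delimited => [j /fQ_x <-|]; rewrite rQ.
by split=> //; split=> // j /=; rewrite dec_x nth_encode.
Qed.

Lemma step_rep phi c q vI vQ vO vC vW q' wI wQ wO wC wW :
  conf_rep c q vI vQ vO vC vW -> q != Halt -> q != Query ->
  let d := trans q (vI.1 vI.2) (vQ.1 vQ.2) (vO.1 vO.2) (vC.1 vC.2) (vW.1 vW.2) in
  d.1 = q' -> view_eq (act_view vI (nth idle d.2 0)) wI ->
  view_eq (act_view vQ (nth idle d.2 1)) wQ -> view_eq (act_view vO (nth idle d.2 2)) wO ->
  view_eq (act_view vC (nth idle d.2 3)) wC -> view_eq (act_view vW (nth idle d.2 4)) wW ->
  conf_rep (step phi c) q' wI wQ wO wC wW.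
Proof. by move=> rep not_halt not_query d <-; apply/conf_rep_ext/conf_rep_step. Qed.

Ltac case_ifs :=
  repeat match goal with |- context [if ?b then _ else _] => case: (boolP b) => ? end.
Ltac subst_eqs :=
  repeat match goal with H : is_true (_ == _) |- _ => move/eqP: H => H; try subst end.
Ltac solve_view_eq :=
  split; [move=> j /=; case_ifs; (reflexivity || (exfalso; lia) || (subst_eqs; reflexivity))
         | simpl; lia].

Definition zeros_query_view (fQ : nat -> sym) p k : nat -> sym :=
  fun j => if (p <= j) && (j < p + k) then Zero else if j == p + k then Blank else fQ j.

Lemma gen_query_phase phi k c vI p fQ vO fC vW :
  conf_rep c GenQuery vI (fQ, p) vO (fC, k) vW -> fC 0 = One ->
  (forall j, 0 < j <= k -> fC j = Zero) ->
  conf_rep (iter k.+1 (step phi) c) Query vI (zeros_query_view fQ p k, p + k) vO (fC, 0) vW.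
Proof.
elim: k c p fQ => [|k IH] c p fQ rep fC0 fC_zeros.
  by apply: (step_rep phi rep); rewrite //= fC0 //; rewrite /zeros_query_view; solve_view_eq.
have rep1 : conf_rep (step phi c) GenQuery vI (write_view fQ p (Some Zero), p.+1) vO (fC, k) vW.
  by apply: (step_rep phi rep); rewrite //= ?fC_zeros //=.
rewrite iterSr; apply: (conf_rep_ext (IH _ _ _ rep1 fC0 _)) => //.
- by move=> j ?; apply: fC_zeros; lia.
- by rewrite /zeros_query_view /write_view; solve_view_eq.
Qed.

Lemma widen_phase phi y d c vI p vO vC fW :
  conf_rep c Widen vI (str_view y, p) vO vC (fW, p.+1) -> p + d = size y ->
  conf_rep (iter d.+1 (step phi) c) RewindWidth vI (str_view y, size y) vO vC
    (fun j => if (p < j) && (j <= size y) then Zero else fW j, (size y).+1).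
Proof.
elim: d c p fW => [|d IH] c p fW rep end_y.
  have y_p : str_view y p = Blank by apply: str_view_default; lia.
  by apply: (step_rep phi rep); rewrite //= y_p //; solve_view_eq.
have y_p : str_view y p = Some (nth false y p) by apply: str_view_nth; lia.
have rep1 : conf_rep (step phi c) Widen vI (str_view y, p.+1) vO vC
                     (write_view fW p.+1 (Some Zero), p.+2).
  by apply: (step_rep phi rep); rewrite //= y_p.
rewrite iterSr; apply: (conf_rep_ext (IH _ _ _ rep1 _)) => //; first lia.
by rewrite /write_view; solve_view_eq.
Qed.

Lemma rewind_width_phase phi h c vI fQ hQ vO vC fW :
  conf_rep c RewindWidth vI (fQ, hQ) vO vC (fW, h) -> fW 0 = One ->
  (forall j, 0 < j <= h -> fW j != One) ->
  conf_rep (iter h.+1 (step phi) c) Advance vI (fQ, hQ - h) vO vC (fW, 1).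
Proof.
elim: h c hQ => [|h IH] c hQ rep fW0 fW_not_one.
  by apply: (step_rep phi rep); rewrite //= fW0 //; solve_view_eq.
have /negbTE fW_h : fW h.+1 != One by apply: fW_not_one; rewrite /= leqnn.
have rep1 : conf_rep (step phi c) RewindWidth vI (fQ, hQ.-1) vO vC (fW, h).
  by apply: (step_rep phi rep); rewrite //= fW_h.
rewrite iterSr; apply: (conf_rep_ext (IH _ _ rep1 fW0 _)) => //.
- by move=> j ?; apply: fW_not_one; lia.
- by solve_view_eq.
Qed.

Lemma advance_phase phi d c fI hI vQ vO fC p vW :
  conf_rep c Advance (fI, hI) vQ vO (fC, p) vW ->
  (forall j, p <= j < p + d -> fC j != Blank) -> fC (p + d) = Blank ->
  (fI hI = Blank ->
     conf_rep (iter d.+1 (step phi) c) RewindInput (fI, hI) vQ vO (fC, p + d) vW) /\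
  (fI hI != Blank ->
     conf_rep (iter d.+1 (step phi) c) GenQuery (fI, hI.+1) vQ vO
       (write_view fC (p + d) (Some Zero), p + d) vW).
Proof.
elim: d c p => [|d IH] c p rep fC_full fC_end.
  rewrite addn0 in fC_end; move: (conf_rep_step phi rep isT isT); rewrite /= fC_end.
  by case: (fI hI) => [s|] /= rep1; split=> // _; apply: (conf_rep_ext rep1); solve_view_eq.
have /negbTE fC_p : fC p != Blank by apply: fC_full; lia.
have rep1 : conf_rep (step phi c) Advance (fI, hI) vQ vO (fC, p.+1) vW.
  by apply: (step_rep phi rep) => //=; case: (fC p) fC_p.
have fC_full' j : p.+1 <= j < p.+1 + d -> fC j != Blank by move=> ?; apply: fC_full; lia.
have [to_rewind to_gen] := IH _ _ rep1 fC_full' (etrans (congr1 fC (addSnnS p d)) fC_end).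
rewrite iterSr; split=> in_end.
  by apply: (conf_rep_ext (to_rewind in_end)); solve_view_eq.
by apply: (conf_rep_ext (to_gen in_end)); rewrite /write_view; solve_view_eq.
Qed.

Lemma rewind_input_phase phi h c fI hI vQ vO fC vW :
  conf_rep c RewindInput (fI, hI) vQ vO (fC, h) vW -> fC 0 = One ->
  (forall j, 0 < j <= h -> fC j != One) ->
  conf_rep (iter h.+1 (step phi) c) CopyInput (fI, hI - h) vQ vO (fC, 1) vW.
Proof.
elim: h c hI => [|h IH] c hI rep fC0 fC_not_one.
  by apply: (step_rep phi rep); rewrite //= fC0 //; solve_view_eq.
have /negbTE fC_h : fC h.+1 != One by apply: fC_not_one; rewrite /= leqnn.
have rep1 : conf_rep (step phi c) RewindInput (fI, hI.-1) vQ vO (fC, h) vW.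
  by apply: (step_rep phi rep); rewrite //= fC_h.
rewrite iterSr; apply: (conf_rep_ext (IH _ _ rep1 fC0 _)) => //.
- by move=> j ?; apply: fC_not_one; lia.
- by solve_view_eq.
Qed.

Lemma copy_input_phase phi a d c p fQ vO vC vW :
  conf_rep c CopyInput (str_view a, p) (fQ, p) vO vC vW -> p + d = size a ->
  conf_rep (iter d.+1 (step phi) c) Query (str_view a, size a)
    (fun j => if (p <= j) && (j < size a) then Some (nth false a j)
              else if j == size a then Blank else fQ j, size a) vO vC vW.
Proof.
elim: d c p fQ => [|d IH] c p fQ rep end_a.
  have a_p : str_view a p = Blank by apply: str_view_default; lia.
  by apply: (step_rep phi rep); rewrite //= a_p //; solve_view_eq.
have a_p : str_view a p = Some (nth false a p) by apply: str_view_nth; lia.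
have rep1 : conf_rep (step phi c) CopyInput (str_view a, p.+1)
                     (write_view fQ p (Some (Some (nth false a p))), p.+1) vO vC vW.
  by apply: (step_rep phi rep); rewrite //= a_p.
rewrite iterSr; apply: (conf_rep_ext (IH _ _ _ rep1 _)) => //; first lia.
by rewrite /write_view; solve_view_eq.
Qed.

Lemma output_phase phi y g d c vI p fO vC fW :
  conf_rep c Output vI (str_view y, p) (fO, p) vC (fW, p.+1) ->
  (forall j, 0 < j <= g -> fW j = Zero) -> fW g.+1 = Blank -> p + d = g ->
  conf_rep (iter d.+1 (step phi) c) Halt vI (str_view y, g)
    (fun j => if (p <= j) && (j < g) then Some (nth false y j) else fO j, g) vC (fW, g.+1).
Proof.
elim: d c p fO => [|d IH] c p fO rep fW_zeros fW_end end_g.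
  have eq_pg : p = g by lia.
  by subst p; apply: (step_rep phi rep); rewrite //= fW_end //; solve_view_eq.
have fW_p : fW p.+1 = Zero by apply: fW_zeros; lia.
have rep1 : conf_rep (step phi c) Output vI (str_view y, p.+1)
                     (write_view fO p (Some (Some (nth false y p))), p.+1) vC (fW, p.+2).
  by apply: (step_rep phi rep); rewrite //= fW_p eqxx str_view_one.
rewrite iterSr; apply: (conf_rep_ext (IH _ _ _ rep1 fW_zeros fW_end _)) => //; first lia.
by rewrite /write_view; solve_view_eq.
Qed.

Definition blank_view : nat -> sym := fun _ => Blank.

Definition unary_view (k : nat) : nat -> sym :=
  fun j => if j == 0 then One else if j <= k then Zero else Blank.

Ltac solve_unary :=
  rewrite /unary_view /blank_view; case_ifs; (reflexivity || (exfalso; lia) || done).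

Definition round_inv (c : conf) (a : str) (k w : nat) (fQ : nat -> sym) :=
  conf_rep c GenQuery (str_view a, k) (fQ, 0) (blank_view, 0) (unary_view k, k)
    (unary_view w, 1).

Lemma round_phase phi a k w fQ c : round_inv c a k w fQ ->
  let y := phi (nseq k false) in
  let m := 2 * k + 2 * size y + 8 in
  (k < size a ->
     round_inv (iter m (step phi) c) a k.+1 (maxn w (size y)) (str_view y)) /\
  (k = size a ->
     conf_rep (iter m (step phi) c) RewindInput (str_view a, k) (str_view y, 0)
       (blank_view, 0) (unary_view k, k.+1) (unary_view (maxn w (size y)), 1)).
Proof.
move=> inv y m.
have asked : conf_rep (iter k.+1 (step phi) c) Query (str_view a, k)
    (zeros_query_view fQ 0 k, k) (blank_view, 0) (unary_view k, 0) (unary_view w, 1).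
  by apply: gen_query_phase inv _ _ => // j ?; solve_unary.
have answered : conf_rep (step phi (iter k.+1 (step phi) c)) Answer (str_view a, k)
    (str_view y, 0) (blank_view, 0) (unary_view k, 0) (unary_view w, 1).
  apply: conf_rep_query asked _ _ => [j|]; rewrite size_nseq /zeros_query_view.
    by move=> lt_jk; rewrite nth_nseq lt_jk.
  by rewrite ltnn eqxx.
have widening : conf_rep (iter 2 (step phi) (iter k.+1 (step phi) c)) Widen (str_view a, k)
    (str_view y, 0) (blank_view, 0) (unary_view k, 0) (unary_view w, 1).
  by apply: (step_rep phi answered).
have widened := widen_phase phi (d := size y) widening (erefl _).
have rewound := rewind_width_phase phi (h := (size y).+1) widened (erefl _)
  (fun j _ => ltac:(solve_unary)).
have [to_rewind to_gen] := advance_phase phi (d := k.+1) rewound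
  (fun j _ => ltac:(solve_unary)) ltac:(solve_unary).
have -> : iter m (step phi) c = iter k.+2 (step phi) (iter (size y).+2 (step phi)
    (iter (size y).+1 (step phi) (iter 2 (step phi) (iter k.+1 (step phi) c)))).
  by rewrite -!iterD; congr iter; rewrite /m; lia.
split=> [lt_ka | eq_ka].
  have a_k : str_view a k != Blank by rewrite str_view_nth.
  by apply: (conf_rep_ext (to_gen a_k)); rewrite /write_view /unary_view; solve_view_eq.
have a_k : str_view a k = Blank by rewrite str_view_default // eq_ka.
by apply: (conf_rep_ext (to_rewind a_k)); rewrite /unary_view; solve_view_eq.
Qed.

(** * Correctness and running time *)

Lemma all_rounds phi a c : round_inv c a 0 0 blank_view -> forall k, k <= size a ->
  exists m fQ, m <= k * (2 * size a + 2 * sizefun phi (size a) + 8) /\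
               round_inv (iter m (step phi) c) a k (max_size_zeros phi k) fQ.
Proof.
move=> inv0; elim=> [|k IH] lt_ka; first by exists 0, blank_view.
have [m [fQ [le_m inv]]] := IH (ltnW lt_ka).
have [next _] := round_phase phi inv.
exists (2 * k + 2 * size (phi (nseq k false)) + 8 + m), (str_view (phi (nseq k false))).
split; last by rewrite iterD; apply: next.
have : size (phi (nseq k false)) <= sizefun phi (size a).
  by apply: size_le_sizefun; rewrite size_nseq ltnW.
nia.
Qed.

Lemma final_phase phi a y g c :
  conf_rep c RewindInput (str_view a, size a) (str_view y, 0) (blank_view, 0)
    (unary_view (size a), (size a).+1) (unary_view g, 1) ->
  halted (iter (g + 2 * size a + 6) (step phi) c) /\
  output (iter (g + 2 * size a + 6) (step phi) c) = mkseq (nth false (phi a)) g.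
Proof.
move=> rep.
have copying : conf_rep (iter (size a).+2 (step phi) c) CopyInput (str_view a, 0)
    (str_view y, 0) (blank_view, 0) (unary_view (size a), 1) (unary_view g, 1).
  apply: (conf_rep_ext (rewind_input_phase phi rep _ _)) => //; last by solve_view_eq.
  by move=> j ?; solve_unary.
have asked := copy_input_phase phi (d := size a) copying (erefl _).
have answered : conf_rep (step phi (iter (size a).+1 (step phi) (iter (size a).+2 (step phi) c)))
    Answer (str_view a, size a) (str_view (phi a), 0) (blank_view, 0)
    (unary_view (size a), 1) (unary_view g, 1).
  apply: conf_rep_query asked _ _ => [j lt_ja|]; first by rewrite lt_ja.
  by rewrite ltnn eqxx.
have outputting : conf_rep (iter 2 (step phi) (iter (size a).+1 (step phi)
      (iter (size a).+2 (step phi) c)))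
    Output (str_view a, size a) (str_view (phi a), 0) (blank_view, 0)
    (unary_view (size a), 1) (unary_view g, 1).
  by apply: (step_rep phi answered) => //=; rewrite /unary_view /=; case: (0 < size a).
have width_zeros j : 0 < j <= g -> unary_view g j = Zero by move=> ?; solve_unary.
have [halt_q _ _ [_ out] _] :=
  output_phase phi (d := g) outputting width_zeros ltac:(solve_unary) (erefl _).
have -> : g + 2 * size a + 6 = g.+1 + (2 + ((size a).+1 + (size a).+2)) by lia.
rewrite !iterD; split; first by rewrite /halted halt_q.
rewrite /output idx_outputE; apply: decode_delimited => [j|]; rewrite size_mkseq out /=.
  by move=> lt_jg; rewrite lt_jg nth_mkseq.
by rewrite ltnn.
Qed.

Lemma init_rep a : conf_rep (init_config retract_machine a) Start (str_view a, 0)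
  (blank_view, 0) (blank_view, 0) (blank_view, 0) (blank_view, 0).
Proof.
rewrite /init_config idx_inputE.
by split=> //=; last split; split=> // j /=; rewrite ?nth_encode ?nth_nil.
Qed.

(* [(n + 1) (2 n + 2 |phi|(n) + 8) + 2 n + |phi|(n) + 7]: [n + 1] rounds, then
   the final phase. *)
Definition time_bound : sopoly :=
  SAdd (SMul (SAdd SVar (SConst 1))
             (SAdd (SAdd (SMul (SConst 2) SVar) (SMul (SConst 2) (SApp SVar))) (SConst 8)))
       (SAdd (SAdd (SMul (SConst 2) SVar) (SApp SVar)) (SConst 7)).

Lemma retract_machine_correct phi a :
  exists t, t <= sop_eval time_bound (sizefun phi) (size a) /\
    halted (run retract_machine phi a t) /\ output (run retract_machine phi a t) = retract phi a.
Proof.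
have inv0 : round_inv (step phi (init_config retract_machine a)) a 0 0 blank_view.
  by apply: (step_rep phi (init_rep a)) => //; rewrite /write_view /unary_view /blank_view;
    solve_view_eq.
have [m [fQ [le_m inv]]] := all_rounds phi inv0 (leqnn (size a)).
have [_ /(_ erefl) last_round] := round_phase phi inv.
set y := phi (nseq (size a) false) in last_round.
set g := maxn _ (size y) in last_round.  (* [= max_size_zeros phi (size a).+1] *)
have [halts out] := final_phase phi last_round.
pose t := g + 2 * size a + 6 + (2 * size a + 2 * size y + 8 + (m + 1)).
have run_t : run retract_machine phi a t = iter (g + 2 * size a + 6) (step phi)
    (iter (2 * size a + 2 * size y + 8) (step phi)
      (iter m (step phi) (step phi (init_config retract_machine a)))).
  by rewrite /run /t !iterD.
exists t; rewrite run_t; split=> //.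
have : size y <= sizefun phi (size a) by apply: size_le_sizefun; rewrite size_nseq.
have : g <= sizefun phi (size a) by exact: (max_size_zeros_le_sizefun phi (leqnn (size a).+1)).
rewrite /t /=; nia.
Qed.

Theorem mainTheorem7 :
  exists R : strfun -> strfun,
    polytime_functional R /\
    (forall phi : strfun, length_monotone (R phi)) /\
    (forall phi : strfun, length_monotone phi -> R phi = phi).
Proof.
exists retract; split; last split.
- by exists retract_machine, time_bound => phi a; apply: retract_machine_correct.
- exact: retract_length_monotone.
- exact: retract_id.
Qed.
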